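(* Let $A$ be a ring and let $Y$ be an infinite subset of $\operatorname{Spec}(A)$ such that every nonzero element of $A$ belongs to only finitely many prime ideals in $Y$. Then $A$ is an integral domain and $\operatorname{Cl}^c(Y)=Y\cup\{(0)\}$.
   Context: Rings are commutative with identity. The constructible topology on $\operatorname{Spec}(A)$ is the coarsest topology in which every set $D(f)=\{\mathfrak p\in\operatorname{Spec}(A): f\notin\mathfrak p\}$, $f\in A$, is clopen; $\operatorname{Cl}^c(Y)$ denotes closure of $Y$ in this topology. *)

From HB Require Import structures.
From mathcomp Require Import all_boot all_order all_algebra.
From Stdlib Require List.
Set Implicit Arguments. Unset Strict Implicit. Unset Printing Implicit Defensive.
Import GRing.Theory.
Local Open Scope ring_scope.

Record is_prime_ideal (A : comNzRingType) (P : A -> Prop) : Prop := {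
  pi_0 : P 0;
  pi_add : forall x y, P x -> P y -> P (x + y);
  pi_mul : forall a x, P x -> P (a * x);
  pi_proper : ~ P 1;
  pi_prime : forall a b, P (a * b) -> P a \/ P b }.

Record Spec (A : comNzRingType) := mkSpec {
  pt : A -> Prop;
  pt_prime : is_prime_ideal pt }.

Definition D (A : comNzRingType) (f : A) : Spec A -> Prop :=
  fun p => ~ pt p f.

Definition finite_set (T : Type) (S : T -> Prop) : Prop :=
  exists l : list T, forall x, S x -> List.In x l.

Definition is_topology (T : Type) (O : (T -> Prop) -> Prop) : Prop :=
  O (fun _ => True) /\
  (forall U V, O U -> O V -> O (fun x => U x /\ V x)) /\
  (forall F : (T -> Prop) -> Prop, (forall U, F U -> O U) ->
       O (fun x => exists U, F U /\ U x)).

(* Open sets of the constructible topology: the coarsest topology in which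
   every D(f) is clopen (i.e. both D(f) and its complement are open). *)
Definition cons_open (A : comNzRingType) (U : Spec A -> Prop) : Prop :=
  forall O : (Spec A -> Prop) -> Prop,
    is_topology O ->
    (forall f : A, O (D f) /\ O (fun p => ~ D f p)) ->
    O U.

Definition cons_closure (A : comNzRingType) (Y : Spec A -> Prop) : Spec A -> Prop :=
  fun p => forall U, cons_open U -> U p -> exists q, U q /\ Y q.

From HB Require Import structures.
From mathcomp Require Import all_boot all_order all_algebra.
From Stdlib Require Import Classical ProofIrrelevance FunctionalExtensionality PropExtensionality.
From Stdlib Require List.
Set Implicit Arguments. Unset Strict Implicit. Unset Printing Implicit Defensive.
Local Open Scope ring_scope.

(* If ab = 0 then every prime contains a or b, so Y is covered by the finite
   sets Y ∩ V(a) and Y ∩ V(b) unless a = 0 or b = 0.  The constructible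
   topology is T1, so a point p of Cl^c(Y) containing some x <> 0 lies in the
   closure of the finite set Y ∩ V(x) (V(x) being clopen), hence in Y.
   Conversely, the sets V which miss only finitely many points of Y as soon as
   they contain (0) form a topology in which every D(f) and its complement are
   open; so every constructible neighbourhood of (0) meets the infinite set Y. *)

Section FiniteSets.
Variable T : Type.

Lemma finite_set_sub (S S' : T -> Prop) :
  (forall x, S x -> S' x) -> finite_set S' -> finite_set S.
Proof. by move=> sub [l Hl]; exists l => x /sub /Hl. Qed.

Lemma finite_setU (S S' : T -> Prop) :
  finite_set S -> finite_set S' -> finite_set (fun x => S x \/ S' x).
Proof.
move=> [l Hl] [l' Hl']; exists (l ++ l')%list => x Sx.
by apply: List.in_or_app; case: Sx => [/Hl|/Hl']; [left|right].
Qed.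

End FiniteSets.

Section ConstructibleTopology.
Variable A : comNzRingType.
Implicit Types (p q : Spec A) (U V Y : Spec A -> Prop).

Lemma Spec_ext p q : pt p = pt q -> p = q.
Proof.
case: p q => P HP [Q HQ] /= ePQ; subst Q.
by rewrite (proof_irrelevance _ HP HQ).
Qed.

Lemma cons_openT : cons_open (fun _ : Spec A => True).
Proof. by move=> O [OT _]. Qed.

Lemma cons_openI U V :
  cons_open U -> cons_open V -> cons_open (fun p => U p /\ V p).
Proof.
by move=> oU oV O tO OD; case: (tO) => _ [OI _]; apply: OI; [apply: oU | apply: oV].
Qed.

Lemma cons_open_D (f : A) : cons_open (D f).
Proof. by move=> O _ OD; case: (OD f). Qed.

Lemma cons_open_V (f : A) : cons_open (fun p => pt p f).
Proof.
move=> O _ OD; case: (OD f) => _.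
suff -> : (fun p => ~ D f p) = (fun p => pt p f) by [].
apply: functional_extensionality => p; apply: propositional_extensionality.
by split => [/NNPP | pf /(_ pf)].
Qed.

Lemma cons_open_separates p q :
  p <> q -> exists U, [/\ cons_open U, U p & ~ U q].
Proof.
move=> npq; have [x nx] : exists x, ~ (pt p x <-> pt q x).
  apply: NNPP => same; apply/npq/Spec_ext/functional_extensionality => x.
  by apply: propositional_extensionality; apply: NNPP => nx; apply: same; exists x.
have [px | npx] := classic (pt p x).
- by exists (fun r => pt r x); split => //; [exact: cons_open_V | tauto].
- exists (D x); split => //; first exact: cons_open_D.
  by rewrite /D => nqx; apply: nx; split => // /NNPP.
Qed.

Lemma cons_open_avoids_list p (l : list (Spec A)) :
  exists U, [/\ cons_open U, U p & forall q, List.In q l -> q <> p -> ~ U q].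
Proof.
elim: l => [|q l [U [oU Up Ul]]].
  by exists (fun _ => True); split => //; exact: cons_openT.
have [qp | nqp] := classic (q = p).
  by exists U; split => // r [<- | /Ul].
have [V [oV Vp nVq]] := cons_open_separates (nesym nqp).
exists (fun r => U r /\ V r); split; [exact: cons_openI | by [] |].
by move=> r [<- _ [] | /Ul rU /rU nUr [/nUr]].
Qed.

Lemma cons_closure_finite Y p : finite_set Y -> cons_closure Y p -> Y p.
Proof.
move=> [l Yl] clp; have [U [oU Up Ul]] := cons_open_avoids_list p l.
have [q [Uq Yq]] := clp U oU Up.
by have [<- | nqp] := classic (q = p); last by case: (Ul q (Yl q Yq) nqp).
Qed.

Lemma cons_closure_V Y p (x : A) :
  pt p x -> cons_closure Y p -> cons_closure (fun q => Y q /\ pt q x) p.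
Proof.
move=> px clp U oU Up.
have [q [[Uq qx] Yq]] := clp _ (cons_openI oU (cons_open_V x)) (conj Up px).
by exists q.
Qed.

End ConstructibleTopology.

Section CofiniteNear.
Variables (T : Type) (Z Y : T -> Prop).

Definition cofinite_near (V : T -> Prop) : Prop :=
  forall r, V r -> Z r -> finite_set (fun q => Y q /\ ~ V q).

Lemma cofinite_near_topology : is_topology cofinite_near.
Proof.
split; first by move=> r _ _; exists nil => q [_ []].
split.
  move=> V W cV cW r [Vr Wr] Zr.
  apply: finite_set_sub (finite_setU (cV r Vr Zr) (cW r Wr Zr)) => q [Yq nVWq].
  by have [Vq | ] := classic (V q); [right; split => // Wq; apply: nVWq | left].
move=> F cF r [V [FV Vr]] Zr.
apply: finite_set_sub (cF V FV r Vr Zr) => q [Yq nUq].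
by split => // Vq; apply: nUq; exists V.
Qed.

End CofiniteNear.

Section FiniteFibres.
Variables (A : comNzRingType) (Y : Spec A -> Prop).
Hypothesis Y_infinite : ~ finite_set Y.
Hypothesis Y_fibres_finite : forall f : A, f != 0 -> finite_set (fun p => Y p /\ pt p f).

Definition zero_point (p : Spec A) : Prop := pt p = (fun x => x = 0).

Lemma mulf_eq0_of_fibres (a b : A) : a * b = 0 -> a = 0 \/ b = 0.
Proof.
move=> ab0; apply: NNPP => /not_or_and [/eqP a0 /eqP b0]; apply: Y_infinite.
apply: finite_set_sub (finite_setU (Y_fibres_finite a0) (Y_fibres_finite b0)) => q Yq.
have Pq := pt_prime q.
have : pt q (a * b) by rewrite ab0; exact: pi_0.
by case/(pi_prime Pq); [left | right].
Qed.

Lemma cons_closure_not_Y_zero p : cons_closure Y p -> ~ Y p -> zero_point p.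
Proof.
move=> clp nYp; apply: functional_extensionality => x.
apply: propositional_extensionality; split; last by move=> ->; exact: (pi_0 (pt_prime p)).
move=> px; apply: NNPP => /eqP x0; apply: nYp.
have [] // := cons_closure_finite (Y_fibres_finite x0) (cons_closure_V px clp).
Qed.

Lemma cofinite_near_zero_cons_open U : cons_open U -> cofinite_near zero_point Y U.
Proof.
move=> oU; apply: oU; first exact: cofinite_near_topology.
move=> f; split=> r fr r0.
- have /eqP f0 : f <> 0 by move=> f0; apply: fr; rewrite r0.
  by apply: finite_set_sub (Y_fibres_finite f0) => q [Yq /NNPP].
- have f0 : f = 0 by move: fr => /NNPP; rewrite r0.
  by exists nil => q [_]; apply; rewrite /D f0; apply; exact: (pi_0 (pt_prime q)).
Qed.

Lemma zero_point_cons_closure p : zero_point p -> cons_closure Y p.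
Proof.
move=> p0 U oU Up; apply: NNPP => noYU; apply: Y_infinite.
have [l Hl] := cofinite_near_zero_cons_open oU Up p0.
by exists l => q Yq; apply: Hl; split => // Uq; apply: noYU; exists q.
Qed.

End FiniteFibres.

Theorem lemma2p9 (A : comNzRingType) (Y : Spec A -> Prop) :
  ~ finite_set Y ->
  (forall f : A, f != 0 -> finite_set (fun p => Y p /\ pt p f)) ->
  (forall a b : A, a * b = 0 -> a = 0 \/ b = 0) /\
  (forall p : Spec A, cons_closure Y p <-> (Y p \/ pt p = (fun x => x = 0))).
Proof.
move=> Yinf Yfin; split; first exact: (mulf_eq0_of_fibres Yinf Yfin).
move=> p; split.
- move=> clp; have [Yp | nYp] := classic (Y p); first by left.
  by right; exact: (cons_closure_not_Y_zero Yfin).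
- case=> [Yp | p0]; first by move=> U _ Up; exists p.
  exact: (zero_point_cons_closure Yinf Yfin).
Qed.
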